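(* Let $\mathcal{A}$ be a unital algebra over a field $F$ with $\operatorname{char}(F)\neq 2$, let $f:\mathcal{A}\to\mathcal{A}$ be linear and let $\alpha=\tfrac12 f(1)$. Then (a) $f\in\operatorname{QJCent}(\mathcal{A})$ if and only if $f(x)=\alpha\circ x$ for all $x\in\mathcal{A}$ and $\alpha\in Z_Q(\mathcal{A})$; (b) $f\in\operatorname{JCent}(\mathcal{A})$ if and only if $f(x)=\alpha\circ x$ for all $x\in\mathcal{A}$ and $\alpha\in Z_J(\mathcal{A})$.
   Context: $x\circ y=xy+yx$, $[x,y]=xy-yx$. $\operatorname{QJCent}(\mathcal{A})$ is the set of linear $f:\mathcal{A}\to\mathcal{A}$ with $f(x)\circ y=x\circ f(y)$ for all $x,y$; $\operatorname{JCent}(\mathcal{A})$ is the set of linear $f$ with $f(x\circ y)=f(x)\circ y$ for all $x,y$. $Z_J(\mathcal{A})=\{a\in\mathcal{A}: [[a,x],y]=0\ \forall x,y\in\mathcal{A}\}$ and $Z_Q(\mathcal{A})=\{a\in\mathcal{A}: [a,[x,y]]=0\ \forall x,y\in\mathcal{A}\}$. *)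

From HB Require Import structures.
From mathcomp Require Import all_boot all_order all_algebra.
Set Implicit Arguments. Unset Strict Implicit. Unset Printing Implicit Defensive.
Import GRing.Theory.
Local Open Scope ring_scope.

Definition jprod (R : nzRingType) (x y : R) : R := x * y + y * x.
Definition lbr (R : nzRingType) (x y : R) : R := x * y - y * x.

Definition QJCent (F : fieldType) (A : algType F) (f : {linear A -> A}) : Prop :=
  forall x y : A, jprod (f x) y = jprod x (f y).

Definition JCent (F : fieldType) (A : algType F) (f : {linear A -> A}) : Prop :=
  forall x y : A, f (jprod x y) = jprod (f x) y.

Definition Z_J (R : nzRingType) (a : R) : Prop :=
  forall x y : R, lbr (lbr a x) y = 0.

Definition Z_Q (R : nzRingType) (a : R) : Prop :=
  forall x y : R, lbr a (lbr x y) = 0.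

From HB Require Import structures.
From mathcomp Require Import all_boot all_order all_algebra.
Import GRing.Theory.
Local Open Scope ring_scope.

(* Evaluating the defining identity of either centroid at 1 gives
   2 f(x) = f(1) o x, so f is Jordan multiplication by alpha = f(1)/2 (this is
   where char F <> 2 is used).  For f = alpha o -, the defining identities
   become, by the associative identities
     (a o x) o y - x o (a o y) = [a, [x, y]]  and
     a o (x o y) - (a o x) o y = [[a, y], x],
   exactly the conditions alpha in Z_Q and alpha in Z_J. *)

Lemma jprodC (R : nzRingType) (x y : R) : jprod x y = jprod y x.
Proof. by rewrite /jprod addrC. Qed.

Lemma jprod1l (R : nzRingType) (x : R) : jprod 1 x = x *+ 2.
Proof. by rewrite /jprod mul1r mulr1 mulr2n. Qed.

Lemma jprod1r (R : nzRingType) (x : R) : jprod x 1 = x *+ 2.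
Proof. by rewrite jprodC jprod1l. Qed.

Lemma jprodZl (F : fieldType) (A : algType F) (k : F) (a x : A) :
  jprod (k *: a) x = k *: jprod a x.
Proof. by rewrite /jprod scalerDr scalerAl scalerAr. Qed.

Lemma lbrC (R : nzRingType) (x y : R) : lbr x y = - lbr y x.
Proof. by rewrite /lbr opprB. Qed.

Lemma lbrNl (R : nzRingType) (x y : R) : lbr (- x) y = - lbr x y.
Proof. by rewrite /lbr mulNr mulrN opprD. Qed.

Lemma jprod_exchange (R : nzRingType) (a x y : R) :
  jprod (jprod a x) y - jprod x (jprod a y) = lbr a (lbr x y).
Proof.
have mul_y_right :
    (a * x + x * a) * y - x * (a * y + y * a) = a * x * y - x * y * a.
  by rewrite mulrDl mulrDr !mulrA (addrKA (x * a * y)).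
have mul_y_left :
    y * (a * x + x * a) - (a * y + y * a) * x = y * x * a - a * y * x.
  by rewrite mulrDl mulrDr !mulrA (addrC (y * a * x)) (addrC (a * y * x))
             (addrKA (y * a * x)).
rewrite /jprod opprD addrACA mul_y_right mul_y_left.
rewrite /lbr mulrBr mulrBl opprB !mulrA.
by rewrite addrACA [RHS]addrACA [- (x * y * a) + _]addrC.
Qed.

Lemma jprod_assoc_defect (R : nzRingType) (a x y : R) :
  jprod a (jprod x y) - jprod (jprod a x) y = lbr (lbr a y) x.
Proof.
rewrite jprodC [jprod (jprod a x) y]jprodC [jprod a x]jprodC jprod_exchange.
by rewrite lbrC [lbr y a]lbrC lbrNl opprK.
Qed.

Section JordanCentroids.

Context {F : fieldType} {A : algType F}.

Lemma QJCent_jprodE {f : {linear A -> A}} {a : A} :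
  (forall x, f x = jprod a x) -> QJCent f <-> Z_Q a.
Proof.
move=> fE; split=> [fQ x y | aQ x y].
  by rewrite -jprod_exchange -!fE fQ subrr.
by apply/subr0_eq; rewrite !fE jprod_exchange.
Qed.

Lemma JCent_jprodE {f : {linear A -> A}} {a : A} :
  (forall x, f x = jprod a x) -> JCent f <-> Z_J a.
Proof.
move=> fE; split=> [fJ x y | aJ x y].
  by rewrite -jprod_assoc_defect -!fE fJ subrr.
by apply/subr0_eq; rewrite !fE jprod_assoc_defect.
Qed.

Hypothesis two_neq0 : (2%:R : F) != 0.

Lemma double_inj : injective (fun v : A => v *+ 2).
Proof. by move=> v w; rewrite /= -!scaler_nat => /(scalerI two_neq0). Qed.

Lemma double_half (v : A) : ((2%:R : F)^-1 *: v) *+ 2 = v.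
Proof. by rewrite -scaler_nat scalerA mulfV // scale1r. Qed.

Lemma QJCent_jprod_half {f : {linear A -> A}} :
  QJCent f -> forall x, f x = jprod ((2%:R : F)^-1 *: f 1) x.
Proof.
move=> fQ x; apply: double_inj.
by rewrite /= jprodZl double_half -jprod1r fQ jprodC.
Qed.

Lemma JCent_jprod_half {f : {linear A -> A}} :
  JCent f -> forall x, f x = jprod ((2%:R : F)^-1 *: f 1) x.
Proof.
move=> fJ x; apply: double_inj.
by rewrite /= jprodZl double_half -fJ jprod1l raddfMn.
Qed.

End JordanCentroids.

Theorem theorem3p1 (F : fieldType) (A : algType F) (f : {linear A -> A})
  (hchar : (2%:R : F) != 0) :
  let alpha := (2%:R : F)^-1 *: f 1 in
  (QJCent f <-> ((forall x : A, f x = jprod alpha x) /\ Z_Q alpha)) /\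
  (JCent f <-> ((forall x : A, f x = jprod alpha x) /\ Z_J alpha)).
Proof.
move=> alpha; split; split.
- move=> fQ; have fE := QJCent_jprod_half hchar fQ.
  by split=> //; apply/(QJCent_jprodE fE).
- by case=> fE /(QJCent_jprodE fE).
- move=> fJ; have fE := JCent_jprod_half hchar fJ.
  by split=> //; apply/(JCent_jprodE fE).
- by case=> fE /(JCent_jprodE fE).
Qed.
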